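(* Let $\mathcal{F}$ be a construction scheme over $\omega_1$ of a good type, let $(X,\leq)$ be an $\omega_1$-like partial order and let $\phi:X\to\omega_1$ be a bijection with $\phi(x)<\phi(y)$ whenever $x<y$. For $x\in X$ and $k\in\omega$ let $M^k_x=\{z\in X: z\leq x\text{ and }\phi(z)\in(\phi(x))_k\}$. Then for all $x,y\in X$ and $k\in\omega$: (1) if $\inf(x,y)$ exists and $k>\rho^{\phi[\{x,y,\inf(x,y)\}]}$, then $M^k_x\cap M^k_y=M^k_{\inf(x,y)}$; (2) if $y\leq x$ and $k>\rho(\phi(x),\phi(y))$, then $M^k_y\subseteq M^k_x$; (3) if $y\not\leq x$, then $y\in M^k_y\setminus M^k_x$; (4) if $x$ is successor-like and $k>\rho^{\phi[\mathrm{pred}(x)\cup\{x\}]}$, then $M^k_x\setminus\bigcup_{z\in\mathrm{pred}(x)}M^k_z=\{x\}$; (5) if $x$ and $y$ are incompatible, then $M^k_x\cap M^k_y=\emptyset$.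
   Context: A type is a sequence $\langle m_k,n_{k+1},r_{k+1}\rangle_{k\in\omega}$ of natural numbers with $m_0=1$ and, for all $k$, $n_{k+1}\geq2$, $m_k>r_{k+1}$, $m_{k+1}=r_{k+1}+(m_k-r_{k+1})n_{k+1}$; good if each $r$ equals $r_k$ for infinitely many $k\geq1$. A construction scheme of type $\tau$ over a set of ordinals $Y$ is a family $\mathcal{F}$ of nonempty finite subsets of $Y$, cofinal among finite subsets of $Y$ under $\subseteq$, each of size $m_k$ for some $k$, such that with $\mathcal{F}_k=\{F\in\mathcal{F}:|F|=m_k\}$: (i) for $E,F\in\mathcal{F}_k$, $E\cap F$ is an initial segment of both; (ii) every $F\in\mathcal{F}_{k+1}$ equals $F_0\cup\dots\cup F_{n_{k+1}-1}$ with $F_i\in\mathcal{F}_k$ forming a $\Delta$-system with root $R(F)$, $|R(F)|=r_{k+1}$, $R(F)<F_0\setminus R(F)<\dots<F_{n_{k+1}-1}\setminus R(F)$ ($A<B$ meaning every element of $A$ is below every element of $B$). $\rho(\alpha,\beta)=\min\{k:\exists F\in\mathcal{F}_k\ \{\alpha,\beta\}\subseteq F\}$; for finite $A$, $\rho^A=\max\{\rho(\alpha,\beta):\alpha,\beta\in A\}$; $(\alpha)_k=\{\xi\leq\alpha:\rho(\xi,\alpha)\leq k\}$. A partial order is $\omega_1$-like if it is well-founded, of size $\omega_1$, and every $(-\infty,x)=\{y:y<x\}$ is countable. $\inf(x,y)$ is the greatest lower bound when it exists; $x,y$ are incompatible if no $z$ satisfies $z\leq x$ and $z\leq y$. $\mathrm{pred}(x)$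 is the set of maximal elements of $(-\infty,x)$; $x$ is successor-like if $\mathrm{pred}(x)$ is finite and every $y<x$ satisfies $y\leq z$ for some $z\in\mathrm{pred}(x)$. *)

(* omega_1 is modelled abstractly as a type W with a strict
   well-order ltW that is uncountable and all of whose proper initial
   segments are countable (this characterises omega_1 up to isomorphism). *)
From Stdlib Require Import Arith List.
Import ListNotations.

Set Implicit Arguments.

Definition card {T : Type} (A : T -> Prop) (n : nat) : Prop :=
  exists l : list T, NoDup l /\ length l = n /\ forall x, A x <-> In x l.

Definition finite_pred {T : Type} (A : T -> Prop) : Prop :=
  exists l : list T, forall x, A x -> In x l.

Definition countable_pred {T : Type} (A : T -> Prop) : Prop :=
  exists f : T -> nat, forall x y, A x -> A y -> f x = f y -> x = y.

Definition bijective {A B : Type} (f : A -> B) : Prop :=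
  (forall x y, f x = f y -> x = y) /\ (forall b, exists a, f a = b).

Definition is_omega1 (W : Type) (ltW : W -> W -> Prop) : Prop :=
  (forall a, ~ ltW a a) /\
  (forall a b c, ltW a b -> ltW b c -> ltW a c) /\
  (forall a b, ltW a b \/ a = b \/ ltW b a) /\
  well_founded ltW /\
  ~ countable_pred (fun _ : W => True) /\
  (forall a, countable_pred (fun b => ltW b a)).

Definition leW {W : Type} (ltW : W -> W -> Prop) (a b : W) : Prop :=
  ltW a b \/ a = b.

(* tau = <m_k, n_{k+1}, r_{k+1}>_k ; n and r are only used at indices >= 1 *)
Definition is_type (m n r : nat -> nat) : Prop :=
  m 0 = 1 /\
  forall k, 2 <= n (S k) /\ r (S k) < m k /\
            m (S k) = r (S k) + (m k - r (S k)) * n (S k).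

Definition good_type (r : nat -> nat) : Prop :=
  forall r0 N, exists k, N <= k /\ 1 <= k /\ r k = r0.

Section Scheme.
Variables (W : Type) (ltW : W -> W -> Prop).

Definition level (Fam : (W -> Prop) -> Prop) (m : nat -> nat) (k : nat)
  (F : W -> Prop) : Prop := Fam F /\ card F (m k).

Definition init_seg (I A : W -> Prop) : Prop :=
  (forall x, I x -> A x) /\ (forall x y, I x -> A y -> ltW y x -> I y).

Definition is_construction_scheme (m n r : nat -> nat)
  (Fam : (W -> Prop) -> Prop) : Prop :=
  (forall F, Fam F -> (exists x, F x) /\ exists k, card F (m k)) /\
  (forall l : list W, exists F, Fam F /\ forall x, In x l -> F x) /\
  (forall k E F, level Fam m k E -> level Fam m k F ->
     init_seg (fun x => E x /\ F x) E /\ init_seg (fun x => E x /\ F x) F) /\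
  (forall k F, level Fam m (S k) F ->
     exists (G : nat -> W -> Prop) (R : W -> Prop),
       (forall i, i < n (S k) -> level Fam m k (G i)) /\
       (forall x, F x <-> exists i, i < n (S k) /\ G i x) /\
       (forall i j, i < n (S k) -> j < n (S k) -> i <> j ->
          forall x, (G i x /\ G j x) <-> R x) /\
       (forall i, i < n (S k) -> forall x, R x -> G i x) /\
       card R (r (S k)) /\
       (forall i x y, i < n (S k) -> R x -> G i y -> ~ R y -> ltW x y) /\
       (forall i j x y, i < j -> j < n (S k) ->
          G i x -> ~ R x -> G j y -> ~ R y -> ltW x y)).

(* rho(a,b) = min { k | exists F in F_k, {a,b} included in F }.
   We only need comparisons with rho, which we state by unfolding the min:
   rho_lt a b k  <->  rho(a,b) < k,   rho_le a b k  <->  rho(a,b) <= k. *)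
Definition rho_lt (Fam : (W -> Prop) -> Prop) (m : nat -> nat)
  (a b : W) (k : nat) : Prop :=
  exists j, j < k /\ exists F, level Fam m j F /\ F a /\ F b.

Definition rho_le (Fam : (W -> Prop) -> Prop) (m : nat -> nat)
  (a b : W) (k : nat) : Prop :=
  exists j, j <= k /\ exists F, level Fam m j F /\ F a /\ F b.

Definition rhoA_lt (Fam : (W -> Prop) -> Prop) (m : nat -> nat)
  (A : W -> Prop) (k : nat) : Prop :=
  forall a b, A a -> A b -> rho_lt Fam m a b k.

Definition closure_k (Fam : (W -> Prop) -> Prop) (m : nat -> nat)
  (a : W) (k : nat) (xi : W) : Prop :=
  leW ltW xi a /\ rho_le Fam m xi a k.

End Scheme.

Section Poset.
Variables (X : Type) (le : X -> X -> Prop).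

Definition is_partial_order : Prop :=
  (forall x, le x x) /\
  (forall x y, le x y -> le y x -> x = y) /\
  (forall x y z, le x y -> le y z -> le x z).

Definition ltX (x y : X) : Prop := le x y /\ x <> y.

Definition omega1_like (W : Type) : Prop :=
  well_founded ltX /\
  (exists f : X -> W, bijective f) /\
  (forall x, countable_pred (fun y => ltX y x)).

Definition is_inf (x y i : X) : Prop :=
  le i x /\ le i y /\ forall z, le z x -> le z y -> le z i.

Definition incompatible (x y : X) : Prop :=
  ~ exists z, le z x /\ le z y.

Definition pred_set (x z : X) : Prop :=
  ltX z x /\ forall w, ltX w x -> le z w -> w = z.

Definition successor_like (x : X) : Prop :=
  finite_pred (pred_set x) /\
  forall y, ltX y x -> exists z, pred_set x z /\ le y z.

End Poset.

Definition M_set {W X : Type} (ltW : W -> W -> Prop)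
  (Fam : (W -> Prop) -> Prop) (m : nat -> nat)
  (le : X -> X -> Prop) (phi : X -> W) (k : nat) (x z : X) : Prop :=
  le z x /\ closure_k ltW Fam m (phi x) k (phi z).

(* Every member of F_k containing phi(x) contains all of (phi(x))_k, so it
   witnesses membership in every M^k_w for w <= x whose image it contains.
   Hence, once k exceeds the relevant values of rho, a single member of F_k
   containing phi(x) also contains phi of the infimum, respectively of every
   immediate predecessor, and each clause reduces to order-theoretic facts
   about <= in X. *)
From Stdlib Require Import Arith List Lia Classical ClassicalEpsilon.

Section SchemeLevels.
Context {W : Type} {ltW : W -> W -> Prop} {m n r : nat -> nat}
  {Fam : (W -> Prop) -> Prop}.
Hypothesis HF : is_construction_scheme ltW m n r Fam.

Lemma level_shrink {d j G a} :
  level Fam m (d + j) G -> G a ->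
  exists P, level Fam m j P /\ P a /\ forall w, P w -> G w.
Proof.
  destruct HF as [_ [_ [_ Hsplit]]].
  revert G a; induction d as [|d IH]; intros G a HG Ga.
  - exists G; auto.
  - destruct (Hsplit _ _ HG) as [Gs [R [HGs [HGcover _]]]].
    destruct (proj1 (HGcover a) Ga) as [i [Hi Gia]].
    destruct (IH (Gs i) a (HGs i Hi) Gia) as [P [HP [Pa PGi]]].
    exists P; split; [exact HP | split; [exact Pa |]].
    intros w Pw; apply HGcover; eauto.
Qed.

(* The coherence clause (i) makes each member of F_k contain the k-closure of
   its points: refine F down to the level of the witness E and compare. *)
Lemma level_contains_closure {k F a xi} :
  level Fam m k F -> F a -> closure_k ltW Fam m a k xi -> F xi.
Proof.
  intros HFk Fa [[Hlt | ->] [j [Hjk [E [HE [Exi Ea]]]]]]; [| exact Fa].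
  replace k with ((k - j) + j) in HFk by lia.
  destruct (level_shrink HFk Fa) as [P [HP [Pa PF]]].
  destruct HF as [_ [_ [Hcoh _]]].
  destruct (Hcoh j P E HP HE) as [_ [_ HPE]].
  apply PF, (HPE a xi (conj Pa Ea) Exi Hlt).
Qed.

Lemma closure_k_of_rho_lt {a b k} :
  rho_lt Fam m a b k -> leW ltW b a -> closure_k ltW Fam m a k b.
Proof.
  intros [j [Hjk [E [HE [Ea Eb]]]]] Hba.
  split; [exact Hba |].
  exists j; split; [lia | eauto].
Qed.

Lemma closure_k_of_level {k F a xi} :
  level Fam m k F -> F a -> F xi -> leW ltW xi a -> closure_k ltW Fam m a k xi.
Proof. intros HFk Fa Fxi Hxia; split; [exact Hxia | exists k; eauto]. Qed.

Hypothesis HW : is_omega1 ltW.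
Hypothesis Htype : is_type m n r.

Lemma type_size_strict_mono {a b} : a < b -> m a < m b.
Proof.
  destruct Htype as [_ Hstep].
  assert (Hsucc : forall t, m t < m (S t)).
  { intro t; destruct (Hstep t) as [Hn [Hr ->]].
    assert ((m t - r (S t)) * 2 <= (m t - r (S t)) * n (S t))
      by (apply Nat.mul_le_mono_l; lia).
    lia. }
  induction 1; [apply Hsucc | specialize (Hsucc m0); lia].
Qed.

Lemma omega1_NoDup_list N : exists l : list W, NoDup l /\ length l = N.
Proof.
  destruct HW as [_ [_ [_ [_ [Hunc _]]]]].
  induction N as [|N [l [Hnd Hlen]]].
  - exists nil; split; [constructor | reflexivity].
  - destruct (classic (exists w, ~ In w l)) as [[w Hw] | Hall].
    + exists (w :: l); split; [constructor; auto | simpl; lia].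
    + exfalso; apply Hunc.
      assert (Hidx : forall w, exists i, nth_error l i = Some w).
      { intro w; apply In_nth_error, NNPP; eauto. }
      exists (fun w => proj1_sig (constructive_indefinite_description _ (Hidx w))).
      intros x y _ _.
      destruct (constructive_indefinite_description _ (Hidx x)) as [i Hi].
      destruct (constructive_indefinite_description _ (Hidx y)) as [j Hj].
      simpl; intros <-; congruence.
Qed.

(* Cofinality gives a member G of size at least m k containing a; as m is
   strictly increasing, G lies at a level >= k and can be shrunk to level k. *)
Lemma level_covers a k : exists F, level Fam m k F /\ F a.
Proof.
  destruct (omega1_NoDup_list (m k)) as [l [Hnd Hlen]].
  pose proof HF as [Hsize [Hcofinal _]].
  destruct (Hcofinal (a :: l)) as [G [HG Hcover]].
  destruct (Hsize G HG) as [_ [j [lG [HndG [HlenG HG_lG]]]]].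
  assert (length l <= length lG).
  { apply NoDup_incl_length; auto.
    intros w Hw; apply HG_lG, Hcover; simpl; auto. }
  assert (Hkj : k <= j).
  { destruct (le_lt_dec k j) as [| Hjk]; auto.
    pose proof (type_size_strict_mono Hjk); lia. }
  assert (HGj : level Fam m ((j - k) + k) G).
  { replace (j - k + k) with j by lia; split; [exact HG | exists lG; auto]. }
  destruct (level_shrink HGj (Hcover a (or_introl eq_refl))) as [P [HP [Pa _]]].
  eauto.
Qed.

Section MSets.
Context {X : Type} {le : X -> X -> Prop} {phi : X -> W}.
Hypothesis Hpo : is_partial_order le.
Hypothesis Hmono : forall x y, ltX le x y -> ltW (phi x) (phi y).

Let M := M_set ltW Fam m le phi.

Lemma phi_leW {x y} : le x y -> leW ltW (phi x) (phi y).
Proof.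
  intro Hxy; destruct (classic (x = y)) as [-> | Hne]; [right; reflexivity |].
  left; apply Hmono; split; assumption.
Qed.

Lemma M_set_le {k x z} : M k x z -> le z x.
Proof. intros [Hzx _]; exact Hzx. Qed.

Lemma M_set_level {k x z F} :
  M k x z -> level Fam m k F -> F (phi x) -> F (phi z).
Proof. intros [_ Hcl] HFk Fx; exact (level_contains_closure HFk Fx Hcl). Qed.

Lemma M_set_of_level {k x z F} :
  le z x -> level Fam m k F -> F (phi x) -> F (phi z) -> M k x z.
Proof.
  intros Hzx HFk Fx Fz; split; [exact Hzx |].
  exact (closure_k_of_level HFk Fx Fz (phi_leW Hzx)).
Qed.

Lemma level_contains_below {k x y F} :
  le y x -> rho_lt Fam m (phi x) (phi y) k ->
  level Fam m k F -> F (phi x) -> F (phi y).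
Proof.
  intros Hyx Hrho HFk Fx.
  exact (level_contains_closure HFk Fx (closure_k_of_rho_lt Hrho (phi_leW Hyx))).
Qed.

Lemma M_set_self k x : M k x x.
Proof.
  destruct Hpo as [Hrefl _].
  destruct (level_covers (phi x) k) as [F [HFk Fx]].
  exact (M_set_of_level (Hrefl x) HFk Fx Fx).
Qed.

Lemma M_set_mono {k x y z} :
  le y x -> rho_lt Fam m (phi x) (phi y) k -> M k y z -> M k x z.
Proof.
  destruct Hpo as [_ [_ Htrans]].
  intros Hyx Hrho HMy.
  destruct (level_covers (phi x) k) as [F [HFk Fx]].
  pose proof (level_contains_below Hyx Hrho HFk Fx) as Fy.
  exact (M_set_of_level (Htrans _ _ _ (M_set_le HMy) Hyx) HFk Fx
           (M_set_level HMy HFk Fy)).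
Qed.

Lemma M_set_inf {k x y i} z :
  is_inf le x y i ->
  rho_lt Fam m (phi x) (phi i) k -> rho_lt Fam m (phi y) (phi i) k ->
  (M k x z /\ M k y z) <-> M k i z.
Proof.
  intros [Hix [Hiy Hglb]] Hxi Hyi; split.
  - intros [HMx HMy].
    destruct (level_covers (phi x) k) as [F [HFk Fx]].
    apply (M_set_of_level (Hglb z (M_set_le HMx) (M_set_le HMy)) HFk).
    + exact (level_contains_below Hix Hxi HFk Fx).
    + exact (M_set_level HMx HFk Fx).
  - intro HMi; split; [exact (M_set_mono Hix Hxi HMi) | exact (M_set_mono Hiy Hyi HMi)].
Qed.

Lemma M_set_not_pred {k x p} : pred_set le x p -> ~ M k p x.
Proof.
  destruct Hpo as [_ [Hanti _]].
  intros [[Hpx Hne] _] HMp; exact (Hne (Hanti _ _ Hpx (M_set_le HMp))).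
Qed.

Lemma M_set_successor_like {k x z} :
  successor_like le x ->
  (forall p, pred_set le x p -> rho_lt Fam m (phi x) (phi p) k) ->
  M k x z -> z <> x -> exists p, pred_set le x p /\ M k p z.
Proof.
  intros [_ Hcover] Hrho HMx Hne.
  destruct (Hcover z (conj (M_set_le HMx) Hne)) as [p [Hp Hzp]].
  exists p; split; [exact Hp |].
  destruct (level_covers (phi x) k) as [F [HFk Fx]].
  apply (M_set_of_level Hzp HFk).
  - exact (level_contains_below (proj1 (proj1 Hp)) (Hrho p Hp) HFk Fx).
  - exact (M_set_level HMx HFk Fx).
Qed.

End MSets.
End SchemeLevels.

Theorem mainTheorem11
  (W : Type) (ltW : W -> W -> Prop) (HW : is_omega1 ltW)
  (m n r : nat -> nat) (Htype : is_type m n r) (Hgood : good_type r)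
  (Fam : (W -> Prop) -> Prop) (HF : is_construction_scheme ltW m n r Fam)
  (X : Type) (le : X -> X -> Prop) (Hpo : is_partial_order le)
  (Hlike : omega1_like le W)
  (phi : X -> W) (Hphi : bijective phi)
  (Hmono : forall x y, ltX le x y -> ltW (phi x) (phi y)) :
  forall (x y : X) (k : nat),
    (* (1) *)
    (forall i, is_inf le x y i ->
       rhoA_lt Fam m (fun a => a = phi x \/ a = phi y \/ a = phi i) k ->
       forall z, (M_set ltW Fam m le phi k x z /\ M_set ltW Fam m le phi k y z)
                 <-> M_set ltW Fam m le phi k i z) /\
    (* (2) *)
    (le y x -> rho_lt Fam m (phi x) (phi y) k ->
       forall z, M_set ltW Fam m le phi k y z -> M_set ltW Fam m le phi k x z) /\
    (* (3) *)
    (~ le y x ->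
       M_set ltW Fam m le phi k y y /\ ~ M_set ltW Fam m le phi k x y) /\
    (* (4) *)
    (successor_like le x ->
       rhoA_lt Fam m (fun a => exists z, (pred_set le x z \/ z = x) /\ a = phi z) k ->
       forall z, (M_set ltW Fam m le phi k x z /\
                  ~ (exists p, pred_set le x p /\ M_set ltW Fam m le phi k p z))
                 <-> z = x) /\
    (* (5) *)
    (incompatible le x y ->
       forall z, ~ (M_set ltW Fam m le phi k x z /\ M_set ltW Fam m le phi k y z)).
Proof.
  intros x y k; split; [| split; [| split; [| split]]].
  - intros i Hinf Hrho z.
    apply (M_set_inf HF HW Htype Hpo Hmono z Hinf); apply Hrho; auto.
  - intros Hyx Hrho z; exact (M_set_mono HF HW Htype Hpo Hmono Hyx Hrho).
  - intros Hyx; split; [exact (M_set_self HF HW Htype Hpo Hmono k y) |].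
    intro HMx; exact (Hyx (M_set_le HMx)).
  - intros Hsucc Hrho z; split.
    + intros [HMx Hnone]; apply NNPP; intro Hne; apply Hnone.
      refine (M_set_successor_like HF HW Htype Hmono Hsucc _ HMx Hne).
      intros p Hp; apply Hrho; eauto.
    + intros ->; split; [exact (M_set_self HF HW Htype Hpo Hmono k x) |].
      intros [p [Hp HMp]]; exact (M_set_not_pred Hpo Hp HMp).
  - intros Hinc z [HMx HMy]; apply Hinc; exists z.
    split; [exact (M_set_le HMx) | exact (M_set_le HMy)].
Qed.
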